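(* The functor $\alpha\colon\mathrm{EMD}\to\mathrm{Ab}$, $(A,B,\phi,\psi)\mapsto A$, is full and essentially surjective, and reflects isomorphisms. For any $M,M'\in\mathrm{EMD}$ there is a natural short exact sequence \[ 0\to\mathrm{Hom}(\alpha(M)[2],\alpha(M')/2)\to\mathrm{EMD}(M,M')\xrightarrow{\alpha}\mathrm{Hom}(\alpha(M),\alpha(M'))\to0. \]
   Context: For an abelian group $U$, $U[2]=\{u:2u=0\}$ and $U/2=U/2U$. A Moore diagram is $(A,B,\phi,\psi)$ with abelian groups $A,B$, $\phi\colon A\to B$, $\psi\colon B\to A$, $\psi\phi=0$, $\phi\psi=2\cdot1_B$; morphisms are pairs $(f\colon A\to A',g\colon B\to B')$ with $g\phi=\phi'f$, $f\psi=\psi'g$. It is exact if the induced sequence $A/2\xrightarrow{\phi}B\xrightarrow{\psi}A[2]$ is short exact; $\mathrm{EMD}$ is the category of exact Moore diagrams, and $\alpha$ sends $(f,g)$ to $f$. *)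

From HB Require Import structures.
From mathcomp Require Import all_boot all_algebra.
From mathcomp Require Import boolp.
From mathcomp Require Import generic_quotient ring_quotient.

Set Implicit Arguments.
Unset Strict Implicit.
Unset Printing Implicit Defensive.
Import GRing.Theory.
Local Open Scope ring_scope.
Local Open Scope quotient_scope.
Import Quotient.

Section Tors2.
Variable U : zmodType.

Definition tors2_pred : {pred U} := fun x => x *+ 2 == 0.

Fact tors2_closed : zmod_closed tors2_pred.
Proof.
split; first by rewrite /tors2_pred unfold_in /= mul0rn.
move=> x y; rewrite !unfold_in /tors2_pred /= mulrnBl => /eqP -> /eqP ->.
by rewrite subr0.
Qed.

HB.instance Definition _ := GRing.isZmodClosed.Build U tors2_pred tors2_closed.

Definition tors2 := {x : U | x \in tors2_pred}.
HB.instance Definition _ := [isSub of tors2 for @sval U (fun x => x \in tors2_pred)].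
HB.instance Definition _ := [Choice of tors2 by <:].
HB.instance Definition _ := [SubChoice_isSubZmodule of tors2 by <:].

Definition twice_pred : {pred U} := fun x => `[< exists y, x = y *+ 2 >].

Fact twice_closed : zmod_closed twice_pred.
Proof.
split; first by rewrite unfold_in /twice_pred; apply/asboolP; exists 0; rewrite mul0rn.
move=> x y; rewrite !unfold_in /twice_pred => /asboolP [a ->] /asboolP [b ->].
by apply/asboolP; exists (a - b); rewrite mulrnBl.
Qed.

HB.instance Definition _ := GRing.isZmodClosed.Build U twice_pred twice_closed.

Definition mod2 := {quot (GRing.ZmodClosed.clone U twice_pred _)}.

End Tors2.

Definition is_hom (U V : zmodType) (f : U -> V) : Prop :=
  forall x y, f (x + y) = f x + f y.

Definition tors2_map (U V : zmodType) (f : U -> V) : tors2 U -> tors2 V :=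
  fun x => insubd (0 : tors2 V) (f (val x)).
Definition mod2_map (U V : zmodType) (f : U -> V) : mod2 U -> mod2 V :=
  fun x => \pi_(mod2 V) (f (repr x)).

Unset Implicit Arguments.

Record moore := Moore {
  mA : zmodType;
  mB : zmodType;
  mphi : mA -> mB;
  mpsi : mB -> mA }.
Arguments mphi : clear implicits.
Arguments mpsi : clear implicits.

Definition is_moore (M : moore) : Prop :=
  [/\ is_hom (mphi M), is_hom (mpsi M),
      (forall a, mpsi M (mphi M a) = 0) &
      (forall b, mphi M (mpsi M b) = b *+ 2)].

Definition phibar (M : moore) : mod2 (mA M) -> mB M :=
  fun x => mphi M (repr x).
Definition psibar (M : moore) : mB M -> tors2 (mA M) :=
  fun b => insubd (0 : tors2 (mA M)) (mpsi M b).

(* A/2 --phi--> B --psi--> A[2] is short exact *)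
Definition exact_moore (M : moore) : Prop :=
  [/\ injective (phibar M),
      (forall t : tors2 (mA M), exists b, psibar M b = t) &
      (forall b, psibar M b = 0 <-> exists x, phibar M x = b)].

Definition is_EMD (M : moore) : Prop := is_moore M /\ exact_moore M.

Definition is_EMD_mor (M M' : moore)
    (m : (mA M -> mA M') * (mB M -> mB M')) : Prop :=
  [/\ is_hom m.1, is_hom m.2,
      (forall a, m.2 (mphi M a) = mphi M' (m.1 a)) &
      (forall b, m.1 (mpsi M b) = mpsi M' (m.2 b))].

Definition mor_comp (M M' M'' : moore)
    (m' : (mA M' -> mA M'') * (mB M' -> mB M''))
    (m : (mA M -> mA M') * (mB M -> mB M')) :
    (mA M -> mA M'') * (mB M -> mB M'') :=
  (fun a => m'.1 (m.1 a), fun b => m'.2 (m.2 b)).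
Definition mor_id (M : moore) : (mA M -> mA M) * (mB M -> mB M) :=
  (fun a => a, fun b => b).

Definition mor_add (M M' : moore)
    (m1 m2 : (mA M -> mA M') * (mB M -> mB M')) :
    (mA M -> mA M') * (mB M -> mB M') :=
  (fun a => m1.1 a + m2.1 a, fun b => m1.2 b + m2.2 b).

Definition is_EMD_iso (M M' : moore)
    (m : (mA M -> mA M') * (mB M -> mB M')) : Prop :=
  is_EMD_mor M M' m /\
  exists m' : (mA M' -> mA M) * (mB M' -> mB M),
    [/\ is_EMD_mor M' M m', mor_comp M M' M m' m = mor_id M & mor_comp M' M M' m m' = mor_id M'].

Definition is_Ab_iso (U V : zmodType) (f : U -> V) : Prop :=
  is_hom f /\ exists g : V -> U, [/\ is_hom g, cancel f g & cancel g f].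

(* An exact Moore diagram is an extension 0 -> A/2 -> B -> A[2] -> 0 in which
   doubling on B is the composite B -> A[2] -> A/2 -> B.  Hence 2b lies in phi(A)
   for every b, and a homomorphism f : A -> A' lifts to B -> B' by Zorn's lemma
   over partial lifts defined on subgroups containing phi(A): a missing b extends
   such a partial lift by a single coset.  For essential surjectivity take
   B = A/2 x A[2] with the addition twisted by a bilinear form c on A[2] with
   c(t, t) = [t] in A/2, again built by Zorn's lemma one coset at a time.  A
   morphism (0, g) satisfies g(phi A) = 0 and psi' g = 0, so g factors as
   phibar' . h . psibar; this identifies the kernel of alpha with Hom(A[2], A'/2).
   Finally, a morphism that is an isomorphism on A is one on B by the five lemma. *)

From HB Require Import structures.
From mathcomp Require Import all_boot all_algebra.
From mathcomp Require Import boolp classical_sets.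
From mathcomp Require Import generic_quotient ring_quotient.
Import GRing.Theory.
Local Open Scope ring_scope.
Local Open Scope quotient_scope.
Set Implicit Arguments.
Unset Strict Implicit.

Section Hom.
Variables (U V : zmodType) (f : U -> V) (hf : is_hom f).

Lemma hom0 : f 0 = 0.
Proof. by apply/(addrI (f 0)); rewrite -hf !addr0. Qed.

Lemma homN x : f (- x) = - f x.
Proof. by apply/(addrI (f x)); rewrite -hf !subrr hom0. Qed.

Lemma homB x y : f (x - y) = f x - f y.
Proof. by rewrite hf homN. Qed.

Lemma homMn x n : f (x *+ n) = f x *+ n.
Proof. by elim: n => [|n IH]; rewrite ?mulr0n ?hom0 // !mulrS hf IH. Qed.

End Hom.

Lemma hom_comp (U V W : zmodType) (f : U -> V) (g : V -> W) :
  is_hom f -> is_hom g -> is_hom (fun x => g (f x)).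
Proof. by move=> hf hg x y; rewrite hf hg. Qed.

Lemma can_hom (U V : zmodType) (f : U -> V) (g : V -> U) :
  is_hom f -> cancel f g -> cancel g f -> is_hom g.
Proof. by move=> hf fK gK x y; apply: (can_inj fK); rewrite hf !gK. Qed.

Lemma hom_inj (U V : zmodType) (f : U -> V) :
  is_hom f -> (forall x, f x = 0 -> x = 0) -> injective f.
Proof.
move=> hf f0 x y fxy; apply/eqP; rewrite -subr_eq0; apply/eqP/f0.
by rewrite (homB hf) fxy subrr.
Qed.

Lemma hom_factor_surj (U V W : zmodType) (s : U -> V) (g : U -> W) :
  is_hom s -> is_hom g -> (forall v, exists u, s u = v) ->
  (forall u, s u = 0 -> g u = 0) -> exists h : V -> W, is_hom h /\ forall u, h (s u) = g u.
Proof.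
move=> hs hg s_surj kers; pose sec v := projT1 (cid (s_surj v)).
have secK v : s (sec v) = v := projT2 (cid (s_surj v)).
have g_eq u u' : s u = s u' -> g u = g u'.
  move=> e; apply/eqP; rewrite -subr_eq0 -(homB hg); apply/eqP/kers.
  by rewrite (homB hs) e subrr.
exists (fun v => g (sec v)); split=> [v v'|u]; last by apply: g_eq; rewrite secK.
by rewrite -hg; apply: g_eq; rewrite hs !secK.
Qed.

Lemma hom_factor_inj (U V W : zmodType) (j : V -> W) (g : U -> W) :
  is_hom j -> is_hom g -> injective j ->
  (forall u, exists v, j v = g u) -> exists k : U -> V, is_hom k /\ forall u, j (k u) = g u.
Proof.
move=> hj hg j_inj im_g; pose k u := projT1 (cid (im_g u)).
have kE u : j (k u) = g u := projT2 (cid (im_g u)).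
by exists k; split=> // u u'; apply: j_inj; rewrite hj !kE hg.
Qed.

Section Mod2Tors2.
Variable U : zmodType.

Definition pi2 (a : U) : mod2 U := \pi_(mod2 U) a.

Lemma pi2D a b : pi2 (a + b) = pi2 a + pi2 b.
Proof. by rewrite /pi2 !piE. Qed.

Lemma pi20 : pi2 0 = 0.
Proof. by rewrite /pi2 piE. Qed.

Lemma pi2_repr x : pi2 (repr x) = x.
Proof. exact: reprK. Qed.

Lemma pi2_surj x : exists a, x = pi2 a.
Proof. by exists (repr x); rewrite pi2_repr. Qed.

Lemma eq_pi2 a b : pi2 a = pi2 b <-> exists y, a - b = y *+ 2.
Proof.
by rewrite /pi2; split=> [/eqP|?]; [|apply/eqP];
  rewrite -Quotient.idealrBE unfold_in /=; [move/asboolP|apply/asboolP].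
Qed.

Lemma pi2_eq0 a : pi2 a = 0 <-> exists y, a = y *+ 2.
Proof.
by rewrite -pi20 eq_pi2; split=> -[y ey]; exists y; rewrite subr0 in ey *.
Qed.

Lemma mod2_addxx (x : mod2 U) : x + x = 0.
Proof. by case: (pi2_surj x) => a ->; rewrite -pi2D; apply/pi2_eq0; exists a. Qed.

Lemma tors2_mul2 (t : tors2 U) : val t *+ 2 = 0.
Proof. by case: t => t /=; rewrite unfold_in => /eqP. Qed.

Lemma tors2_addxx (t : tors2 U) : t + t = 0.
Proof. by apply: val_inj; rewrite /= -mulr2n tors2_mul2. Qed.

Lemma val_insub_tors2 (a : U) : a *+ 2 = 0 -> val (insubd (0 : tors2 U) a) = a.
Proof. by move=> a2; rewrite insubdK // unfold_in; apply/eqP. Qed.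

End Mod2Tors2.

Lemma oppr_addxx (V : zmodType) (v : V) : v + v = 0 -> - v = v.
Proof. by move=> vv; apply/eqP; rewrite eq_sym -subr_eq0 opprK vv. Qed.

Section MooreDiagram.
Variables (M : moore) (HM : is_moore M).
Local Notation phi := (mphi M).
Local Notation psi := (mpsi M).

Lemma phi_mul2 a : phi (a *+ 2) = 0.
Proof. by case: HM => hphi _ psiphi phipsi; rewrite (homMn hphi) -phipsi psiphi (hom0 hphi). Qed.

Lemma psi_mul2 b : psi b *+ 2 = 0.
Proof. by case: HM => _ hpsi psiphi phipsi; rewrite -(homMn hpsi) -phipsi psiphi. Qed.

Lemma phibar_pi a : phibar M (pi2 a) = phi a.
Proof.
case: HM => hphi _ _ _; have [y ey] := proj1 (eq_pi2 _ _) (pi2_repr (pi2 a)).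
by apply/eqP; rewrite -subr_eq0 -(homB hphi) ey phi_mul2.
Qed.

Lemma val_psibar b : val (psibar M b) = psi b.
Proof. exact/val_insub_tors2/psi_mul2. Qed.

End MooreDiagram.

Record EMD_spec (M : moore) : Prop := EMDSpec {
  phi_hom : is_hom (mphi M);
  psi_hom : is_hom (mpsi M);
  psi_phi : forall a, mpsi M (mphi M a) = 0;
  phi_psi : forall b, mphi M (mpsi M b) = b *+ 2;
  ker_phi : forall a, mphi M a = 0 -> exists y, a = y *+ 2;
  ker_psi : forall b, mpsi M b = 0 -> exists a, b = mphi M a;
  psi_surj : forall t, t *+ 2 = 0 -> exists b, mpsi M b = t }.

Lemma EMD_spec_moore M : EMD_spec M -> is_moore M.
Proof. by case. Qed.

Lemma is_EMDP M : is_EMD M <-> EMD_spec M.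
Proof.
split=> [[HM [phibar_inj psibar_surj ker_psibar]] | SM].
  case: (HM) => hphi hpsi psiphi phipsi; split=> //.
  - move=> a phia0; apply/pi2_eq0/phibar_inj.
    by rewrite -pi20 !(phibar_pi HM) phia0 (hom0 hphi).
  - move=> b psib0; have /ker_psibar [x <-] : psibar M b = 0.
      by apply: val_inj; rewrite (val_psibar HM).
    by exists (repr x).
  - move=> t t2; have [b /(congr1 val)] := psibar_surj (insubd 0 t).
    by rewrite (val_psibar HM) val_insub_tors2 //; exists b.
have HM := EMD_spec_moore SM; split=> //; split.
- move=> x y; case: (pi2_surj x) => a ->; case: (pi2_surj y) => a' ->.
  rewrite !(phibar_pi HM) => ea; apply/eq_pi2/(ker_phi SM).
  by rewrite (homB (phi_hom SM)) ea subrr.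
- move=> t; have [b psib] := psi_surj SM (tors2_mul2 t).
  by exists b; apply: val_inj; rewrite (val_psibar HM).
- move=> b; split=> [/(congr1 val)|[x <-]].
    rewrite (val_psibar HM) => /(ker_psi SM) [a ->].
    by exists (pi2 a); rewrite (phibar_pi HM).
  case: (pi2_surj x) => a ->; apply: val_inj.
  by rewrite (val_psibar HM) (phibar_pi HM) (psi_phi SM).
Qed.

Section MaximalClosed.
Local Open Scope classical_set_scope.
Variables (T : Type) (R : set T -> T -> T -> Prop).
Hypothesis R_mono : forall X Y p q, X `<=` Y -> R X p q -> R Y p q.

Definition closed_under (X : set T) := forall p q, X p -> X q -> R X p q.

Lemma maximal_closed_under (X0 : set T) : closed_under X0 ->
  exists X, [/\ X0 `<=` X, closed_under X & forall Y, X `<` Y -> ~ closed_under Y].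
Proof.
move=> cX0; pose P A := closed_under (X0 `|` A).
have [A [PA maxA]] : exists A, P A /\ forall B, A `<` B -> ~ P B.
  apply: Zorn_bigcup => F FP Ftot p q pF qF.
  have [X [PX XF pX qX]] : exists X, [/\ P X, X `<=` \bigcup_(Y in F) Y,
      (X0 `|` X) p & (X0 `|` X) q].
    have sub X : F X -> X `<=` \bigcup_(Y in F) Y by move=> FX x Xx; exists X.
    case: pF => [p0|[Xp FXp Xpp]]; case: qF => [q0|[Xq FXq Xqq]].
    - by exists set0; rewrite /P setU0; split=> //; left.
    - by exists Xq; split; [exact: FP|exact: sub|left|right].
    - by exists Xp; split; [exact: FP|exact: sub|right|left].
    - have [XpXq|XqXp] := Ftot _ _ FXp FXq.
        by exists Xq; split; [exact: FP|exact: sub|right; apply: XpXq|right].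
      by exists Xp; split; [exact: FP|exact: sub|right|right; apply: XqXp].
  by apply: R_mono (PX _ _ pX qX); apply: setUS.
exists (X0 `|` A); split=> [|//|Y [AY YA] cY]; first exact: subsetUl.
have X0Y : X0 `<=` Y by move=> x X0x; apply: AY; left.
apply: (maxA Y); last by rewrite /P setUidr.
by split=> [x Ax|YA']; [apply: AY; right|apply: YA => y /YA'; right].
Qed.
End MaximalClosed.

Section Lift.
Local Open Scope classical_set_scope.
Variables (M M' : moore) (SM : EMD_spec M) (SM' : EMD_spec M').
Variables (f : mA M -> mA M') (hf : is_hom f).
Local Notation phi := (mphi M).
Local Notation psi := (mpsi M).
Local Notation phi' := (mphi M').
Local Notation psi' := (mpsi M').
Local Notation X := (mB M * mB M')%type.

(* [closed_under lift_rel H] says that [H] is the graph of an additive partial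
   map [g] with [psi' \o g = f \o psi]. *)
Definition lift_rel (H : set X) (p q : X) : Prop :=
  [/\ p.1 = q.1 -> p.2 = q.2, H (p + q) & psi' p.2 = f (psi p.1)].

Definition lift_graph0 : set X := range (fun a => (phi a, phi' (f a))).

Lemma lift_rel_mono H K p q : H `<=` K -> lift_rel H p q -> lift_rel K p q.
Proof. by move=> HK [? /HK ? ?]. Qed.

Lemma lift_graph0N p : lift_graph0 p -> lift_graph0 (- p).
Proof.
case=> a _ <-; exists (- a) => //.
by rewrite (homN (phi_hom SM)) (homN hf) (homN (phi_hom SM')).
Qed.

Lemma lift_graph0_mul2 p : psi' p.2 = f (psi p.1) -> lift_graph0 (p *+ 2).
Proof.
move: p => [b b'] /= psib'; exists (psi b) => //.
by rewrite -psib' !phi_psi.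
Qed.

Lemma closed_lift_graph0 : closed_under lift_rel lift_graph0.
Proof.
move=> _ _ [a _ <-] [a' _ <-]; split=> /=.
- move=> ea; have [y ey] : exists y, a - a' = y *+ 2.
    by apply: (ker_phi SM); rewrite (homB (phi_hom SM)) ea subrr.
  apply/eqP; rewrite -subr_eq0 -(homB (phi_hom SM')) -(homB hf) ey (homMn hf).
  by rewrite (phi_mul2 (EMD_spec_moore SM')).
- by exists (a + a') => //; rewrite (phi_hom SM) hf (phi_hom SM').
- by rewrite (psi_phi SM') (psi_phi SM) (hom0 hf).
Qed.

Section Extend.
Variables (H : set X) (cH : closed_under lift_rel H) (graph0H : lift_graph0 `<=` H).

Lemma partial_liftN p : H p -> H (- p).
Proof.
move=> Hp; have [_ _ psip] := cH Hp Hp.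
have -> : - p = p + - (p *+ 2) by rewrite mulr2n opprD addrA subrr add0r.
by have [_ ? _] := cH Hp (graph0H (lift_graph0N (lift_graph0_mul2 psip))).
Qed.

Variables (beta : X) (psi_beta : psi' beta.2 = f (psi beta.1)).
Hypothesis beta_undef : ~ exists b', H (beta.1, b').

Definition lift_extend : set X := H `|` [set p + beta | p in H].

Lemma closed_lift_extend : closed_under lift_rel lift_extend.
Proof.
have beta_dbl : H (beta *+ 2) by apply/graph0H/lift_graph0_mul2.
have coset_undef p q : H p -> H q -> p.1 = (q + beta).1 -> False.
  move=> Hp Hq e; apply: beta_undef; exists (p - q).2.
  have [_ Hpq _] := cH Hp (partial_liftN Hq).
  have -> : beta.1 = (p - q).1 by rewrite /= e /= addrAC subrr add0r.
  by case: (p - q) Hpq.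
move=> p q [Hp|[p0 Hp0 <-]] [Hq|[q0 Hq0 <-]].
- exact: lift_rel_mono (@subsetUl _ _ _) (cH Hp Hq).
- have [_ Hpq0 _] := cH Hp Hq0.
  split=> [e|/=|]; [by case: (coset_undef _ _ Hp Hq0 e)| |by case: (cH Hp Hp)].
  by right; exists (p + q0); rewrite // addrA.
- have [_ Hp0q psip0] := cH Hp0 Hq.
  split=> [e|/=|/=]; [by case: (coset_undef _ _ Hq Hp0 (esym e))| |].
    by right; exists (p0 + q); rewrite // addrAC.
  by rewrite (psi_hom SM') psip0 psi_beta -hf -(psi_hom SM).
- have [e12 Hpq0 psip0] := cH Hp0 Hq0.
  split=> [/= /addIr e|/=|/=].
  + by rewrite (e12 e).
  + left; rewrite addrACA -mulr2n.
    by have [_ ? _] := cH Hpq0 beta_dbl.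
  + by rewrite (psi_hom SM') psip0 psi_beta -hf -(psi_hom SM).
Qed.

End Extend.

Lemma exists_lift : exists g : mB M -> mB M', is_EMD_mor M M' (f, g).
Proof.
have [H [graph0H cH maxH]] := maximal_closed_under lift_rel_mono closed_lift_graph0.
have H0 : H 0.
  apply: graph0H; exists 0 => //.
  by rewrite (hom0 (phi_hom SM)) (hom0 hf) (hom0 (phi_hom SM')).
have total b : exists b', H (b, b').
  apply: contrapT => bundef.
  have [b' psib'] : exists b', psi' b' = f (psi b).
    by apply: (psi_surj SM'); rewrite -(homMn hf) (psi_mul2 (EMD_spec_moore SM)) (hom0 hf).
  apply: (maxH (lift_extend H (b, b'))); last exact: closed_lift_extend.
  split=> [|sub]; first exact: subsetUl.
  have /sub Hb : lift_extend H (b, b') (b, b') by right; exists 0; rewrite ?add0r.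
  by apply: bundef; exists b'.
pose g b := projT1 (cid (total b)).
have Hg b : H (b, g b) := projT2 (cid (total b)).
exists g; split=> //=.
- move=> b c; have [_ Hbc _] := cH _ _ (Hg b) (Hg c).
  by have [e _ _] := cH _ _ (Hg (b + c)) Hbc; exact: e.
- move=> a; have graph0a : H (phi a, phi' (f a)) by apply: graph0H; exists a.
  by have [e _ _] := cH _ _ (Hg (phi a)) graph0a; exact: e.
- by move=> b; have [_ _ ->] := cH _ _ (Hg b) (Hg b).
Qed.

End Lift.

Lemma mulrn_addb (U : zmodType) (u : U) : u + u = 0 ->
  forall i j : bool, u *+ i + u *+ j = u *+ (i (+) j).
Proof. by move=> uu [] []; rewrite /= ?mulr0n ?mulr1n ?addr0 ?add0r. Qed.

Section DiagonalBilinear.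
Local Open Scope classical_set_scope.
Variables (V W : zmodType) (V2 : forall v : V, v + v = 0) (W2 : forall w : W, w + w = 0).
Variables (th : V -> W) (hth : is_hom th).
Local Notation T := ((V * V) * W)%type.

(* [closed_under bilin_rel H] says that [H] is the graph of a bilinear form on
   [D * D] with diagonal [th], where [D] is the set of [x] such that [(x, x)] is
   in the domain of [H]. *)
Record bilin_rel (H : set T) (p q : T) : Prop := BilinRel {
  bilin_fun : p.1 = q.1 -> p.2 = q.2;
  bilin_dom : (exists w, H ((p.1.1, p.1.1), w)) /\ (exists w, H ((p.1.2, p.1.2), w));
  bilin_sq : p.1.1 = p.1.2 -> q.1.1 = q.1.2 -> exists w, H ((p.1.1, q.1.1), w);
  bilin_r : p.1.1 = q.1.1 -> H ((p.1.1, p.1.2 + q.1.2), p.2 + q.2);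
  bilin_l : p.1.2 = q.1.2 -> H ((p.1.1 + q.1.1, p.1.2), p.2 + q.2);
  bilin_diag : p.1.1 = p.1.2 -> p.2 = th p.1.1 }.

Lemma bilin_rel_mono H K p q : H `<=` K -> bilin_rel H p q -> bilin_rel K p q.
Proof.
move=> HK [pf [[w1 h1] [w2 h2]] psq pr pl pd]; split=> // [|/psq/[apply]-[w hw]|/pr|/pl];
  by [split; [exists w1|exists w2]; apply: HK | exists w; apply: HK | apply: HK].
Qed.

Lemma closed_bilin0 : closed_under bilin_rel [set ((0, 0), 0)].
Proof.
move=> _ _ -> ->; split=> //= [|_ _|_|_|_]; rewrite ?addr0 ?(hom0 hth) //.
  by split; exists 0.
by exists 0.
Qed.

Section Extend.
Variables (H : set T) (cH : closed_under bilin_rel H).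
Definition bilin_domain (x : V) := exists w, H ((x, x), w).

Lemma bilin_domainD x y : bilin_domain x -> bilin_domain y -> bilin_domain (x + y).
Proof.
move=> [w1 h1] [w2 h2].
have [w12 h12] := bilin_sq (cH h1 h2) erefl erefl.
have [w21 h21] := bilin_sq (cH h2 h1) erefl erefl.
have hl1 := bilin_l (cH h1 h21) erefl; have hl2 := bilin_l (cH h12 h2) erefl.
by eexists; apply: (bilin_r (cH hl1 hl2)).
Qed.

Variables (v : V) (v_undef : ~ bilin_domain v).

Lemma bilin_coset_inj x x' (i i' : bool) : bilin_domain x -> bilin_domain x' ->
  x + v *+ i = x' + v *+ i' -> i = i' /\ x = x'.
Proof.
move=> Dx Dx'; case: i i' => -[] /= e; rewrite ?mulr0n ?mulr1n ?addr0 in e;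
  try by split=> //; apply: addIr e.
- exfalso; apply: v_undef; rewrite (_ : v = x' + x); first exact: bilin_domainD.
  by rewrite -e addrAC V2 add0r.
- exfalso; apply: v_undef; rewrite (_ : v = x + x'); first exact: bilin_domainD.
  by rewrite e addrAC V2 add0r.
Qed.

Definition bilin_extend : set T := [set p | exists x y w (i j : bool),
  H ((x, y), w) /\ p = ((x + v *+ i, y + v *+ j), w + th v *+ (i && j))].

Lemma bilin_extendP x y w (i j : bool) : H ((x, y), w) ->
  bilin_extend ((x + v *+ i, y + v *+ j), w + th v *+ (i && j)).
Proof. by move=> Hxyw; exists x, y, w, i, j. Qed.

Lemma sub_bilin_extend : H `<=` bilin_extend.
Proof.
by move=> [[x y] w] /(bilin_extendP false false); rewrite !mulr0n !addr0.
Qed.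

Lemma closed_bilin_extend : closed_under bilin_rel bilin_extend.
Proof.
move=> _ _ [x [y [w [i [j [Hp ->]]]]]] [x' [y' [w' [i' [j' [Hq ->]]]]]].
have [Dx Dy] : bilin_domain x /\ bilin_domain y := bilin_dom (cH Hp Hp).
have [Dx' Dy'] : bilin_domain x' /\ bilin_domain y' := bilin_dom (cH Hq Hq).
have thv2 : th v + th v = 0 by apply: W2.
split=> /=.
- case=> /(bilin_coset_inj Dx Dx') [? ?] /(bilin_coset_inj Dy Dy') [? ?].
  subst i' x' j' y'.
  by have /= -> := bilin_fun (cH Hp Hq) erefl.
- have [[u Hx] [u' Hy]] := (Dx, Dy).
  by split; [exists (u + th v *+ (i && i))|exists (u' + th v *+ (j && j))];
    apply: bilin_extendP.
- move=> /(bilin_coset_inj Dx Dy) [? ?] /(bilin_coset_inj Dx' Dy') [? ?].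
  subst j y j' y'.
  have [u Hu] := bilin_sq (cH Hp Hq) erefl erefl.
  by exists (u + th v *+ (i && i')); apply: bilin_extendP.
- move=> /(bilin_coset_inj Dx Dx') [? ?]; subst i' x'.
  rewrite [y + _ + _]addrACA [w + _ + _]addrACA !(mulrn_addb (V2 v)) (mulrn_addb thv2).
  rewrite (_ : (i && j) (+) (i && j') = i && (j (+) j')); last by case: i j j' => [] [] [].
  by apply: bilin_extendP; exact: (bilin_r (cH Hp Hq)).
- move=> /(bilin_coset_inj Dy Dy') [? ?]; subst j' y'.
  rewrite [x + _ + _]addrACA [w + _ + _]addrACA !(mulrn_addb (V2 v)) (mulrn_addb thv2).
  rewrite (_ : (i && j) (+) (i' && j) = (i (+) i') && j); last by case: i i' j => [] [] [].
  by apply: bilin_extendP; exact: (bilin_l (cH Hp Hq)).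
- move=> /(bilin_coset_inj Dx Dy) [? ?]; subst j y.
  by have /= -> := bilin_diag (cH Hp Hp) erefl; rewrite andbb hth (homMn hth).
Qed.

End Extend.

Lemma exists_bilinear_diagonal : exists c : V -> V -> W,
  [/\ forall x y z, c x (y + z) = c x y + c x z,
      forall x y z, c (x + y) z = c x z + c y z &
      forall x, c x x = th x].
Proof.
have [H [H0 cH maxH]] := maximal_closed_under bilin_rel_mono closed_bilin0.
have D x : bilin_domain H x.
  apply: contrapT => x_undef.
  apply: (maxH (bilin_extend H x)); last exact: closed_bilin_extend.
  split=> [|sub]; first exact: sub_bilin_extend.
  apply: x_undef; exists (0 + th x *+ (true && true)); apply: sub.
  have /(@bilin_extendP H x 0 0 0 true true) : H ((0, 0), 0) by apply: H0.
  by rewrite !add0r.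
have total x y : exists w, H ((x, y), w).
  by have [[w1 h1] [w2 h2]] := (D x, D y); exact: (bilin_sq (cH _ _ h1 h2)).
pose c x y := projT1 (cid (total x y)).
have Hc x y : H ((x, y), c x y) := projT2 (cid (total x y)).
exists c; split=> [x y z|x y z|x].
- exact: (bilin_fun (cH _ _ (Hc _ _) (bilin_r (cH _ _ (Hc x y) (Hc x z)) erefl))).
- exact: (bilin_fun (cH _ _ (Hc _ _) (bilin_l (cH _ _ (Hc x z) (Hc y z)) erefl))).
- exact: (bilin_diag (cH _ _ (Hc x x) (Hc x x))).
Qed.

End DiagonalBilinear.

Section TwistForm.
Variable U : zmodType.

Lemma pi2_val_hom : is_hom (fun t : tors2 U => pi2 (val t)).
Proof. by move=> s t; rewrite -pi2D. Qed.

Definition twist_form : tors2 U -> tors2 U -> mod2 U :=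
  projT1 (cid (exists_bilinear_diagonal (@tors2_addxx U) (@mod2_addxx U) pi2_val_hom)).

Let twist_form_spec := projT2 (cid
  (exists_bilinear_diagonal (@tors2_addxx U) (@mod2_addxx U) pi2_val_hom)).

Lemma twist_formDr x y z : twist_form x (y + z) = twist_form x y + twist_form x z.
Proof. by case: twist_form_spec. Qed.

Lemma twist_formDl x y z : twist_form (x + y) z = twist_form x z + twist_form y z.
Proof. by case: twist_form_spec. Qed.

Lemma twist_formxx x : twist_form x x = pi2 (val x).
Proof. by case: twist_form_spec. Qed.

Lemma twist_form0l x : twist_form 0 x = 0.
Proof. by apply/(addrI (twist_form 0 x)); rewrite -twist_formDl !addr0. Qed.

Lemma twist_formC x y : twist_form x y = twist_form y x.
Proof.
have := twist_formxx (x + y).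
rewrite twist_formDl !twist_formDr !twist_formxx /= pi2D -addrA => /addrI.
rewrite addrA -[X in _ = X]add0r => /addIr /eqP; rewrite addr_eq0 => /eqP ->.
exact/oppr_addxx/mod2_addxx.
Qed.

End TwistForm.

(* A/2 * A[2] with the addition twisted by the cocycle [twist_form]; doubling
   [(x, t)] gives [(twist_form t t, 0) = (pi2 t, 0)], which is the Moore relation. *)
Definition twisted (U : zmodType) := (mod2 U * tors2 U)%type.
HB.instance Definition _ (U : zmodType) := Choice.copy (twisted U) (mod2 U * tors2 U)%type.

Section Twisted.
Variable U : zmodType.

Definition twisted_add (p q : twisted U) : twisted U :=
  (p.1 + q.1 + twist_form p.2 q.2, p.2 + q.2).
Definition twisted_opp (p : twisted U) : twisted U := (- p.1 + twist_form p.2 p.2, - p.2).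

Lemma twisted_addA : associative twisted_add.
Proof.
move=> [x s] [y t] [z u]; rewrite /twisted_add /=; congr pair; last by rewrite addrA.
rewrite twist_formDl twist_formDr !addrA [RHS]addrAC; congr (_ + _).
by rewrite [LHS]addrAC; congr (_ + _); rewrite addrAC.
Qed.

Lemma twisted_addC : commutative twisted_add.
Proof.
by move=> [x s] [y t]; rewrite /twisted_add /= twist_formC [x + y]addrC [s + t]addrC.
Qed.

Lemma twisted_add0 : left_id (0, 0) twisted_add.
Proof. by move=> [x s]; rewrite /twisted_add /= twist_form0l !add0r addr0. Qed.

Lemma twisted_addN : left_inverse (0, 0) twisted_opp twisted_add.
Proof.
move=> [x s]; rewrite /twisted_add /= addNr [- x + _ + x]addrAC addNr add0r.
by rewrite (oppr_addxx (tors2_addxx s)) mod2_addxx.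
Qed.

End Twisted.

HB.instance Definition _ (U : zmodType) :=
  GRing.isZmodule.Build (twisted U) (@twisted_addA U) (@twisted_addC U)
    (@twisted_add0 U) (@twisted_addN U).

Section TwistedMoore.
Variable U : zmodType.

Definition twisted_moore : moore :=
  @Moore U (GRing.Zmodule.clone (twisted U) _) (fun a => (pi2 a, 0)) (fun p => val p.2).

Lemma twisted_EMD : EMD_spec twisted_moore.
Proof.
split=> /=.
- move=> a b; have tf00 := twist_form0l (0 : tors2 U).
  by rewrite pi2D; congr pair; rewrite /= ?tf00 addr0.
- by move=> ? ?.
- by [].
- move=> [x s]; rewrite mulr2n; congr pair => /=; last by rewrite tors2_addxx.
  by rewrite mod2_addxx add0r twist_formxx.
- by move=> a /(congr1 fst) /pi2_eq0.
- move=> [x s] /= s0; exists (repr x); rewrite pi2_repr; congr pair.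
  by apply: val_inj; exact: s0.
- by move=> t t2; exists (0, insubd 0 t); rewrite /= val_insub_tors2.
Qed.

End TwistedMoore.

Section BarMaps.
Variables (M : moore) (SM : EMD_spec M).

Lemma psibar_hom : is_hom (psibar M).
Proof.
by move=> b c; apply: val_inj; rewrite /= !(val_psibar (EMD_spec_moore SM)) (psi_hom SM).
Qed.

Lemma phibar_hom : is_hom (phibar M).
Proof.
move=> x y; case: (pi2_surj x) => a ->; case: (pi2_surj y) => a' ->.
by rewrite -pi2D !(phibar_pi (EMD_spec_moore SM)) (phi_hom SM).
Qed.

Lemma phibar_inj : injective (phibar M).
Proof. by case/is_EMDP: SM => _ []. Qed.

Lemma psibar_surj t : exists b, psibar M b = t.
Proof. by case/is_EMDP: SM => _ []. Qed.

Lemma psibar_eq0 b : psibar M b = 0 <-> exists x, phibar M x = b.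
Proof. by case/is_EMDP: SM => _ []. Qed.

End BarMaps.

Section FiveLemma.
Variables (M M' : moore) (SM : EMD_spec M) (SM' : EMD_spec M').
Variables (f : mA M -> mA M') (g : mB M -> mB M') (hfg : is_EMD_mor M M' (f, g)).
Variables (finv : mA M' -> mA M) (fK : cancel f finv) (finvK : cancel finv f).

Lemma EMD_mor_inj : injective g.
Proof.
case: (hfg) => /= hf hg g_phi f_psi; apply: (hom_inj hg) => b gb0.
have /(ker_psi SM) [a eb] : mpsi M b = 0.
  by apply: (can_inj fK); rewrite f_psi gb0 (hom0 (psi_hom SM')) (hom0 hf).
subst b; move: gb0; rewrite g_phi => /(ker_phi SM') [y fa].
have -> : a = finv y *+ 2 by rewrite -(homMn (can_hom hf fK finvK)) -fa fK.
exact: (phi_mul2 (EMD_spec_moore SM)).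
Qed.

Lemma EMD_mor_surj b' : exists b, g b = b'.
Proof.
case: (hfg) => /= hf hg g_phi f_psi.
have [b psib] : exists b, mpsi M b = finv (mpsi M' b').
  apply: (psi_surj SM); rewrite -(homMn (can_hom hf fK finvK)).
  by rewrite (psi_mul2 (EMD_spec_moore SM')) (hom0 (can_hom hf fK finvK)).
have /(ker_psi SM') [a' e] : mpsi M' (b' - g b) = 0.
  by rewrite (homB (psi_hom SM')) -f_psi psib finvK subrr.
exists (b + mphi M (finv a')); rewrite hg /= g_phi finvK -e.
by rewrite addrC subrK.
Qed.

End FiveLemma.

Lemma reflect_iso (M M' : moore) (m : (mA M -> mA M') * (mB M -> mB M')) :
  EMD_spec M -> EMD_spec M' -> is_EMD_mor M M' m -> is_Ab_iso (mA M) (mA M') m.1 ->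
  is_EMD_iso M M' m.
Proof.
case: m => f g /= SM SM' hfg [_ [finv [hfinv fK finvK]]]; split=> //.
pose ginv b' := projT1 (cid (EMD_mor_surj SM SM' hfg fK finvK b')).
have ginvK : cancel ginv g := fun b' => projT2 (cid (EMD_mor_surj SM SM' hfg fK finvK b')).
have gK : cancel g ginv by apply: inj_can_sym ginvK (EMD_mor_inj SM SM' hfg fK finvK).
case: (hfg) => /= _ hg g_phi f_psi.
exists (finv, ginv); split.
- split=> //= [|a'|b']; first exact: can_hom hg gK ginvK.
    by apply: (can_inj gK); rewrite ginvK g_phi finvK.
  by apply: (can_inj fK); rewrite finvK f_psi ginvK.
- by congr pair; apply: funext => x /=; rewrite ?fK ?gK.
- by congr pair; apply: funext => x /=; rewrite ?finvK ?ginvK.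
Qed.

Definition iota (M M' : moore) (h : tors2 (mA M) -> mod2 (mA M')) :
  (mA M -> mA M') * (mB M -> mB M') :=
  (fun _ => 0, fun b => phibar M' (h (psibar M b))).
Arguments iota : clear implicits.

Section Iota.
Variables (M M' : moore) (SM : EMD_spec M) (SM' : EMD_spec M').

Lemma iota_EMD_mor h : is_hom h -> is_EMD_mor M M' (iota M M' h).
Proof.
move=> hh; split=> /= [_ _|||b]; first by rewrite addr0.
- exact/hom_comp/(phibar_hom SM')/hom_comp/hh/(psibar_hom SM).
- move=> a; have -> : psibar M (mphi M a) = 0 by apply/(psibar_eq0 SM); exists (pi2 a);
    rewrite (phibar_pi (EMD_spec_moore SM)).
  by rewrite (hom0 hh) (hom0 (phibar_hom SM')) (hom0 (phi_hom SM')).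
- case: (pi2_surj (h (psibar M b))) => a ->.
  by rewrite (phibar_pi (EMD_spec_moore SM')) (psi_phi SM').
Qed.

Lemma iotaD h1 h2 :
  iota M M' (fun t => h1 t + h2 t) = mor_add M M' (iota M M' h1) (iota M M' h2).
Proof.
by congr pair; apply: funext => x /=; rewrite ?addr0 ?(phibar_hom SM').
Qed.

Lemma iota_inj h1 h2 : iota M M' h1 = iota M M' h2 -> h1 = h2.
Proof.
case=> /(congr1 (fun g => g _)) e; apply: funext => t.
by have [b <-] := psibar_surj SM t; apply: (phibar_inj SM'); exact: e.
Qed.

Lemma iota_ker m : is_EMD_mor M M' m -> m.1 = (fun _ => 0) ->
  exists h, is_hom h /\ iota M M' h = m.
Proof.
case: m => f g [/= _ hg g_phi f_psi] f0; subst f.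
(* [g] lands in the image of [phibar M'] and kills [ker (psibar M) = phi(A)]. *)
have [k [hk phik]] : exists k, is_hom k /\ forall b, phibar M' (k b) = g b.
  apply: hom_factor_inj (phibar_hom SM') hg (phibar_inj SM') _ => b.
  by apply/(psibar_eq0 SM'); apply: val_inj; rewrite /= (val_psibar (EMD_spec_moore SM')) -f_psi.
have [h [hh hk_psi]] : exists h, is_hom h /\ forall b, h (psibar M b) = k b.
  apply: hom_factor_surj (psibar_hom SM) hk (psibar_surj SM) _ => b /(psibar_eq0 SM) [x <-].
  apply: (phibar_inj SM'); rewrite phik (hom0 (phibar_hom SM')).
  by case: (pi2_surj x) => a ->; rewrite (phibar_pi (EMD_spec_moore SM)) g_phi (hom0 (phi_hom SM')).
by exists h; split=> //; congr pair; apply: funext => b /=; rewrite hk_psi phik.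
Qed.

End Iota.

Lemma psibar_natural (N M : moore) (u : (mA N -> mA M) * (mB N -> mB M)) b :
  EMD_spec N -> EMD_spec M -> is_EMD_mor N M u ->
  tors2_map u.1 (psibar N b) = psibar M (u.2 b).
Proof.
move=> SN SM [hu1 _ _ u_psi]; apply: val_inj.
rewrite (val_psibar (EMD_spec_moore SM)) -u_psi /tors2_map val_insub_tors2;
  rewrite (val_psibar (EMD_spec_moore SN)) //.
by rewrite -(homMn hu1) (psi_mul2 (EMD_spec_moore SN)) (hom0 hu1).
Qed.

Lemma phibar_natural (M N : moore) (v : (mA M -> mA N) * (mB M -> mB N)) x :
  EMD_spec M -> EMD_spec N -> is_EMD_mor M N v ->
  phibar N (mod2_map v.1 x) = v.2 (phibar M x).
Proof.
move=> SM SN [_ _ v_phi _]; change (phibar N (pi2 (v.1 (repr x))) = v.2 (mphi M (repr x))).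
by rewrite (phibar_pi (EMD_spec_moore SN)) v_phi.
Qed.

Lemma iota_natural (N M M' N' : moore) (u : (mA N -> mA M) * (mB N -> mB M))
    (v : (mA M' -> mA N') * (mB M' -> mB N')) (h : tors2 (mA M) -> mod2 (mA M')) :
  EMD_spec N -> EMD_spec M -> EMD_spec M' -> EMD_spec N' ->
  is_EMD_mor N M u -> is_EMD_mor M' N' v ->
  iota N N' (fun t => mod2_map v.1 (h (tors2_map u.1 t)))
  = mor_comp N M N' (mor_comp M M' N' v (iota M M' h)) u.
Proof.
move=> SN SM SM' SN' hu hv; congr pair; apply: funext => b /=.
  by case: hv => hv1 _ _ _; rewrite (hom0 hv1).
by rewrite (psibar_natural _ SN SM hu) (phibar_natural _ SM' SN' hv).
Qed.

Theorem corollary3p20 :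
  (* alpha is full *)
  (forall M M' : moore, is_EMD M -> is_EMD M' ->
     forall f : mA M -> mA M', is_hom f ->
       exists g : mB M -> mB M', is_EMD_mor M M' (f, g)) /\
  (* alpha is essentially surjective *)
  (forall A : zmodType,
     exists M : moore, is_EMD M /\ exists f : mA M -> A, is_Ab_iso (mA M) A f) /\
  (* alpha reflects isomorphisms *)
  (forall M M' : moore, is_EMD M -> is_EMD M' ->
     forall m : (mA M -> mA M') * (mB M -> mB M'),
       is_EMD_mor M M' m -> is_Ab_iso (mA M) (mA M') m.1 -> is_EMD_iso M M' m) /\
  (* natural short exact sequence
     0 -> Hom(A[2], A'/2) --iota--> EMD(M,M') --alpha--> Hom(A, A') -> 0 *)
  (exists iota : forall M M' : moore,
       (tors2 (mA M) -> mod2 (mA M')) -> (mA M -> mA M') * (mB M -> mB M'),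
     (forall M M' : moore, is_EMD M -> is_EMD M' ->
       [/\ (* iota lands in EMD(M,M') *)
           forall h, is_hom h -> is_EMD_mor M M' (iota M M' h),
           (* iota is a group homomorphism *)
           forall h1 h2, is_hom h1 -> is_hom h2 ->
             iota M M' (fun x => h1 x + h2 x)
             = mor_add M M' (iota M M' h1) (iota M M' h2),
           (* iota is injective *)
           forall h1 h2, is_hom h1 -> is_hom h2 ->
             iota M M' h1 = iota M M' h2 -> h1 = h2,
           (* exactness in the middle: ker alpha = im iota *)
           forall m, is_EMD_mor M M' m ->
             (m.1 = (fun _ => 0) <->
              exists h, is_hom h /\ iota M M' h = m)
         & (* alpha is surjective *)
           forall f : mA M -> mA M', is_hom f ->
             exists m, is_EMD_mor M M' m /\ m.1 = f]) /\
     (* naturality in M (contravariant) and M' (covariant) *)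
     (forall N M M' N' : moore,
       is_EMD N -> is_EMD M -> is_EMD M' -> is_EMD N' ->
       forall (u : (mA N -> mA M) * (mB N -> mB M))
              (v : (mA M' -> mA N') * (mB M' -> mB N')),
         is_EMD_mor N M u -> is_EMD_mor M' N' v ->
         forall h : tors2 (mA M) -> mod2 (mA M'), is_hom h ->
           iota N N' (fun x => mod2_map v.1 (h (tors2_map u.1 x)))
           = mor_comp N M N' (mor_comp M M' N' v (iota M M' h)) u)).
Proof.
split; first by move=> M M' /is_EMDP SM /is_EMDP SM'; exact: exists_lift.
split.
  move=> A; exists (twisted_moore A); split; first exact/is_EMDP/twisted_EMD.
  by exists id; split=> [? ?|] //; exists id.
split; first by move=> M M' /is_EMDP SM /is_EMDP SM' m; exact: reflect_iso.
exists iota; split=> [M M' /is_EMDP SM /is_EMDP SM'|]; first split.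
- exact: iota_EMD_mor.
- by move=> h1 h2 _ _; exact: iotaD.
- by move=> h1 h2 _ _; exact: iota_inj.
- by move=> m hm; split=> [|[h [_ <-]]]; first exact: iota_ker.
- by move=> f /(exists_lift SM SM') [g hg]; exists (f, g).
move=> N M M' N' /is_EMDP SN /is_EMDP SM /is_EMDP SM' /is_EMDP SN' u v hu hv h _.
exact: iota_natural.
Qed.
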